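(* Let $G=(V,E)$ be a graph with no isolated vertices and $m\ge1$ edges. Then the linear programs $\mathrm{LP}_{\mathrm{complete}}$ and $\mathrm{LP}_{\mathrm{sparse}}$ (defined in the context) have the same set of optimal solutions; in particular every optimal solution of $\mathrm{LP}_{\mathrm{sparse}}$ is feasible for $\mathrm{LP}_{\mathrm{complete}}$, i.e. is a pseudo-metric on $V$ with values in $[0,1]$, and the two programs have the same optimal objective value.
   Context: $G=(V,E)$ is an undirected simple graph, $V=\{1,\dots,n\}$, $m=|E|$, adjacency matrix $A$, degrees $d_i$, modularity matrix $B_{i,j}=A_{i,j}-\frac{d_id_j}{2m}$. Variables $d_{i,j}$ satisfy $d_{i,j}=d_{j,i}$, $d_{i,i}=0$. $N(i)$ is the neighbor set of $i$ and $N(i,j)=(N(i)\cup N(j))\setminus\{i,j\}$. A pseudo-metric is a function $d$ on $V\times V$ with $d(i,j)\ge0$, $d(i,i)=0$, $d(i,j)=d(j,i)$ and $d(i,j)\le d(i,k)+d(k,j)$. $\mathrm{LP}_{\mathrm{complete}}$: maximize $\frac{1}{2m}\sum_{i,j}B_{i,j}(1-d_{i,j})$ (sum over all ordered pairs) subject to the triangle inequalities $d_{i,j}+d_{j,k}\ge d_{i,k}$, $d_{i,j}+d_{i,k}\ge d_{j,k}$, $d_{j,k}+d_{i,k}\ge d_{i,j}$ for all $i<j<k$, and $d_{i,j}\in[0,1]$ for all $i\ne j$. $\mathrm{LP}_{\mathrm{sparse}}$: maximize $-\frac{1}{2m}\sum_{i,j}B_{i,j}d_{i,j}$ subject to $d_{i,k}+d_{k,j}\ge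 d_{i,j}$ for every pair $i\ne j$ and every $k\in N(i,j)$, and $d_{i,j}\in[0,1]$ for all $i\ne j$. (Since $\sum_{i,j}B_{i,j}=0$, the two objectives coincide on every vector $d$.) *)

(* Graph on V = 'I_n (vertices 0..n-1 instead of 1..n),
   given by a boolean adjacency relation e (assumed symmetric, irreflexive
   in the theorem). Reals: an arbitrary real field R. *)
From HB Require Import structures.
From mathcomp Require Import all_boot all_order all_algebra.
Set Implicit Arguments. Unset Strict Implicit. Unset Printing Implicit Defensive.
Import Order.TTheory GRing.Theory Num.Theory.
Local Open Scope ring_scope.

Section Defs.
Variable n : nat.
Variable e : rel 'I_n.
Variable R : realFieldType.

Definition deg (i : 'I_n) : nat := #|[set j | e i j]|.
(* number of edges m = (sum of degrees)/2 (handshake lemma) *)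
Definition num_edges : nat := ((\sum_(i < n) deg i)%N)./2.
Definition no_isolated : Prop := forall i : 'I_n, (0 < deg i)%N.

Definition modB (i j : 'I_n) : R :=
  (e i j)%:R - ((deg i)%:R * (deg j)%:R) / (2 * (num_edges)%:R).

Definition lp_var (d : 'I_n -> 'I_n -> R) : Prop :=
  (forall i j, d i j = d j i) /\ (forall i, d i i = 0).

Definition unit_bounds (d : 'I_n -> 'I_n -> R) : Prop :=
  forall i j, i != j -> 0 <= d i j <= 1.

Definition obj_complete (d : 'I_n -> 'I_n -> R) : R :=
  (2 * (num_edges)%:R)^-1 * \sum_(i < n) \sum_(j < n) modB i j * (1 - d i j).

Definition obj_sparse (d : 'I_n -> 'I_n -> R) : R :=
  - ((2 * (num_edges)%:R)^-1 * \sum_(i < n) \sum_(j < n) modB i j * d i j).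

Definition feasible_complete (d : 'I_n -> 'I_n -> R) : Prop :=
  lp_var d /\ unit_bounds d /\
  (forall i j k : 'I_n, (i < j)%N -> (j < k)%N ->
     [/\ d i j + d j k >= d i k, d i j + d i k >= d j k & d j k + d i k >= d i j]).

Definition nbr2 (i j : 'I_n) : {set 'I_n} :=
  ([set k | e i k] :|: [set k | e j k]) :\: [set i; j].

Definition feasible_sparse (d : 'I_n -> 'I_n -> R) : Prop :=
  lp_var d /\ unit_bounds d /\
  (forall i j : 'I_n, i != j -> forall k, k \in nbr2 i j -> d i k + d k j >= d i j).

Definition optimal_complete (d : 'I_n -> 'I_n -> R) : Prop :=
  feasible_complete d /\
  forall d', feasible_complete d' -> obj_complete d' <= obj_complete d.

Definition optimal_sparse (d : 'I_n -> 'I_n -> R) : Prop :=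
  feasible_sparse d /\
  forall d', feasible_sparse d' -> obj_sparse d' <= obj_sparse d.

Definition pseudo_metric (d : 'I_n -> 'I_n -> R) : Prop :=
  (forall i j, 0 <= d i j) /\ (forall i, d i i = 0) /\
  (forall i j, d i j = d j i) /\ (forall i j k, d i j <= d i k + d k j).

End Defs.

From HB Require Import structures.
From mathcomp Require Import all_boot all_order all_algebra.
From mathcomp Require Import lra.
From Stdlib Require Import FunctionalExtensionality.
Set Implicit Arguments. Unset Strict Implicit. Unset Printing Implicit Defensive.
Import Order.TTheory GRing.Theory Num.Theory.
Local Open Scope ring_scope.

(* Proof idea.
   (1) Because every row of the modularity matrix B sums to zero (handshake
       lemma), the two objectives agree on every vector d.
   (2) A feasible point of LP_complete is exactly a pseudo-metric with values
       in [0,1]; in particular it is feasible for LP_sparse.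
   (3) Metric closure: for d feasible for LP_sparse, let D be the shortest-walk
       distance for the weights "d on edges, 1 on non-edges", computed by
       Floyd-Warshall relaxation.  D is a pseudo-metric bounded by 1, it agrees
       with d on edges, and the sparse triangle inequalities give d <= D.
   (4) B is negative off the edges (no isolated vertex), so raising d off the
       edges can only increase the objective, strictly unless nothing changed.
   Hence closing an optimal sparse solution cannot improve it, so it is already
   its own closure and thus complete-feasible; the equivalence of the optimal
   sets and the equality of the optimal values follow from (1)-(4). *)

Section MetricClosure.
Variables (R : realFieldType) (n : nat) (e : rel 'I_n) (d : 'I_n -> 'I_n -> R).
Hypothesis e_sym : symmetric e.
Hypothesis d_sym : forall i j, d i j = d j i.
Hypothesis d_diag : forall i, d i i = 0.
Hypothesis d_ge0 : forall i j, 0 <= d i j.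
Hypothesis d_le1 : forall i j, d i j <= 1.
Hypothesis d_tri :
  forall i j : 'I_n, i != j -> forall k, k \in nbr2 e i j -> d i k + d k j >= d i j.

Definition step_weight (i j : 'I_n) : R :=
  if i == j then 0 else if e i j then d i j else 1.

(* Floyd-Warshall: shortest walks whose inner vertices are among the pivots s. *)
Fixpoint relax (s : seq 'I_n) : 'I_n -> 'I_n -> R :=
  match s with
  | [::] => step_weight
  | k :: s' => fun i j => Order.min (relax s' i j) (relax s' i k + relax s' k j)
  end.

Fixpoint walk_weight (i : 'I_n) (p : seq 'I_n) (j : 'I_n) : R :=
  match p with [::] => step_weight i j | v :: p' => step_weight i v + walk_weight v p' j end.

Lemma min_cases (x y : R) : Order.min x y = x \/ Order.min x y = y.
Proof. by case: (leP x y); [left | right]. Qed.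

Lemma step_weight_ge0 i j : 0 <= step_weight i j.
Proof. by rewrite /step_weight; case: eqP => // _; case: (e i j). Qed.

Lemma step_weight_sym i j : step_weight i j = step_weight j i.
Proof. by rewrite /step_weight eq_sym e_sym d_sym. Qed.

Lemma relax_ge0 s i j : 0 <= relax s i j.
Proof.
elim: s i j => [|k s IH] i j /=; first exact: step_weight_ge0.
by rewrite le_min IH addr_ge0.
Qed.

Lemma relax_le_step s i j : relax s i j <= step_weight i j.
Proof.
elim: s i j => [|k s IH] i j //=.
by apply: le_trans (IH i j); rewrite ge_min lexx.
Qed.

Lemma relax_diag s i : relax s i i = 0.
Proof.
apply/eqP; rewrite eq_le relax_ge0 andbT.
by have := relax_le_step s i i; rewrite /step_weight eqxx.
Qed.

Lemma relax_sym s i j : relax s i j = relax s j i.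
Proof.
elim: s i j => [|k s IH] i j /=; first exact: step_weight_sym.
by rewrite IH (IH i k) (IH k j) addrC.
Qed.

Lemma relax_tri s b : b \in s -> forall i j, relax s i j <= relax s i b + relax s b j.
Proof.
elim: s => [|k s IH] //; rewrite in_cons => hb i j /=.
have F_kk := relax_diag s k.
case/orP: hb => [/eqP-> | hb].
  by rewrite F_kk addr0 add0r !minxx ge_min lexx orbT.
have T1 := IH hb i j; have T2 := IH hb k j; have T3 := IH hb i k.
have N1 := relax_ge0 s k b; have N2 := relax_ge0 s b k.
have L1 : Order.min (relax s i j) (relax s i k + relax s k j) <= relax s i j.
  by rewrite ge_min lexx.
have L2 : Order.min (relax s i j) (relax s i k + relax s k j)
          <= relax s i k + relax s k j.
  by rewrite ge_min lexx orbT.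
case: (min_cases (relax s i b) (relax s i k + relax s k b)) => ->;
case: (min_cases (relax s b j) (relax s b k + relax s k j)) => ->; lra.
Qed.

Lemma walk_weight_cat i p a q j :
  walk_weight i (p ++ a :: q) j = walk_weight i p a + walk_weight a q j.
Proof. by elim: p i => [|v p IH] i //=; rewrite IH addrA. Qed.

Lemma relax_walk s i j : exists p, relax s i j = walk_weight i p j.
Proof.
elim: s i j => [|k s IH] i j /=; first by exists [::].
case: (min_cases (relax s i j) (relax s i k + relax s k j)) => ->; first exact: IH.
have [p1 ->] := IH i k; have [p2 ->] := IH k j.
by exists (p1 ++ k :: p2); rewrite walk_weight_cat.
Qed.

(* One step of a walk cannot beat d: this is where the sparse triangle
   inequalities (through neighbours of i) are used. *)
Lemma d_le_step_weight i v j : d i j <= step_weight i v + d v j.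
Proof.
rewrite /step_weight; case: (eqVneq i v) => [->|hiv]; first by rewrite add0r.
case: (eqVneq i j) => [->|hij]; first by rewrite d_diag addr_ge0 //; case: ifP.
case hev: (e i v); last by have := d_ge0 v j; have := d_le1 i j; lra.
case: (eqVneq v j) => [->|hvj]; first by rewrite d_diag addr0.
apply: d_tri => //; rewrite /nbr2 !inE hev /= negb_or hvj andbT.
by rewrite eq_sym hiv.
Qed.

Lemma d_le_walk_weight p i j : d i j <= walk_weight i p j.
Proof.
elim: p i => [|v p IH] i /=.
  by have := d_le_step_weight i j j; rewrite d_diag addr0.
exact: le_trans (d_le_step_weight i v j) (lerD (lexx _) (IH v)).
Qed.

Definition metric_closure := relax (enum 'I_n).

Lemma metric_closure_pseudo_metric : pseudo_metric metric_closure.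
Proof.
split; first by move=> i j; exact: relax_ge0.
split; first by move=> i; exact: relax_diag.
split; first by move=> i j; exact: relax_sym.
by move=> i j k; apply: relax_tri; rewrite mem_enum.
Qed.

Lemma metric_closure_le1 i j : metric_closure i j <= 1.
Proof.
apply: le_trans (relax_le_step _ i j) _; rewrite /step_weight.
by case: eqP => _ //; case: (e i j).
Qed.

Lemma d_le_metric_closure i j : d i j <= metric_closure i j.
Proof.
rewrite /metric_closure; have [p ->] := relax_walk (enum 'I_n) i j.
exact: d_le_walk_weight.
Qed.

Lemma metric_closure_edge i j : e i j -> metric_closure i j = d i j.
Proof.
move=> hij; apply/eqP; rewrite eq_le d_le_metric_closure andbT.
apply: le_trans (relax_le_step _ i j) _; rewrite /step_weight hij.
by case: eqP => [->|_]; rewrite ?d_diag.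
Qed.

End MetricClosure.

Section Feasibility.
Variables (R : realFieldType) (n : nat) (e : rel 'I_n).

(* The three triangle inequalities of a triple, in a form invariant under
   every permutation of the triple (given symmetry of d). *)
Definition triangle3 (d : 'I_n -> 'I_n -> R) (i j k : 'I_n) : Prop :=
  [/\ d i j <= d j k + d k i, d j k <= d k i + d i j & d k i <= d i j + d j k].

Lemma triangle3_rot d i j k : triangle3 d i j k -> triangle3 d j k i.
Proof. by case. Qed.

Lemma triangle3_swap d i j k :
  (forall x y, d x y = d y x) -> triangle3 d i j k -> triangle3 d j i k.
Proof.
move=> ds [t1 t2 t3]; have s1 := ds i j; have s2 := ds j k; have s3 := ds k i.
by split; lra.
Qed.

Lemma triangle3_distinct (d : 'I_n -> 'I_n -> R) :
  (forall x y, d x y = d y x) ->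
  (forall i j k : 'I_n, (i < j)%N -> (j < k)%N -> triangle3 d i j k) ->
  forall i j k : 'I_n, i != j -> j != k -> k != i -> triangle3 d i j k.
Proof.
move=> ds sorted.
have key (i j k : 'I_n) : (i < j)%N -> j != k -> k != i -> triangle3 d i j k.
  move=> hij hjk hki.
  case: (ltngtP j k) => [hjk'|hkj|/val_inj/eqP]; last by rewrite (negbTE hjk).
  - exact: sorted.
  - case: (ltngtP k i) => [hki'|hik|/val_inj/eqP]; last by rewrite (negbTE hki).
    + by apply: triangle3_rot; apply: sorted.
    + by apply: triangle3_rot; apply: triangle3_swap ds _; apply: sorted.
move=> i j k hij hjk hki.
case: (ltngtP i j) => [h|h|/val_inj/eqP]; last by rewrite (negbTE hij).
- exact: key.
- by apply: triangle3_swap ds _; apply: key; rewrite // eq_sym.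
Qed.

Lemma feasible_complete_pseudo_metric (d : 'I_n -> 'I_n -> R) :
  feasible_complete d -> pseudo_metric d /\ (forall i j, 0 <= d i j <= 1).
Proof.
move=> [[ds d0] [ub htri]].
have bnd i j : 0 <= d i j <= 1.
  by case: (eqVneq i j) => [->|h]; [rewrite d0 lexx ler01 | exact: ub].
have ge0 i j : 0 <= d i j by case/andP: (bnd i j).
split=> //; split; first exact: ge0.
do 2 (split; first by []).
move=> i j k.
case: (eqVneq i j) => [<-|hij]; first by rewrite d0 addr_ge0.
case: (eqVneq k i) => [->|hki]; first by rewrite d0 add0r.
case: (eqVneq j k) => [->|hjk]; first by rewrite d0 addr0.
have sorted (a b c : 'I_n) : (a < b)%N -> (b < c)%N -> triangle3 d a b c.
  move=> hab hbc; have [t1 t2 t3] := htri a b c hab hbc; have s_ac := ds a c.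
  by split; lra.
have [t1 _ _] := triangle3_distinct ds sorted hij hjk hki.
by have := ds k i; have := ds j k; lra.
Qed.

Lemma pseudo_metric_feasible_complete (d : 'I_n -> 'I_n -> R) :
  pseudo_metric d -> (forall i j, d i j <= 1) -> feasible_complete d.
Proof.
move=> [ge0 [d0 [ds tri]]] le1.
do 2 (split; first by [split | move=> i j _; rewrite ge0 le1]).
move=> i j k _ _; split.
- exact: tri.
- by rewrite -(ds j i) tri.
- by have := tri i j k; rewrite (ds k j) addrC.
Qed.

Lemma feasible_complete_sparse (d : 'I_n -> 'I_n -> R) :
  feasible_complete d -> feasible_sparse e d.
Proof.
move=> hf; have [[_ [_ [_ tri]]] _] := feasible_complete_pseudo_metric hf.
by case: hf => lv [ub _]; do 2 (split => //) => i j _ k _; exact: tri.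
Qed.

Lemma sparse_closure (d : 'I_n -> 'I_n -> R) :
  symmetric e -> feasible_sparse e d ->
  exists D, [/\ feasible_complete D, forall i j, e i j -> D i j = d i j
              & forall i j, d i j <= D i j].
Proof.
move=> e_sym [[ds d0] [ub dtri]].
have bnd i j : 0 <= d i j <= 1.
  by case: (eqVneq i j) => [->|h]; [rewrite d0 lexx ler01 | exact: ub].
have ge0 i j : 0 <= d i j by case/andP: (bnd i j).
have le1 i j : d i j <= 1 by case/andP: (bnd i j).
(* ge0 and le1 are the remaining hypotheses of the closure lemmas. *)
exists (metric_closure e d); split.
- apply: pseudo_metric_feasible_complete.
    exact: metric_closure_pseudo_metric.
  exact: metric_closure_le1.
- exact: metric_closure_edge.
- exact: d_le_metric_closure.
Qed.

End Feasibility.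

Section Objective.
Variables (R : realFieldType) (n : nat) (e : rel 'I_n).
Hypotheses (e_sym : symmetric e) (e_irr : irreflexive e)
  (hiso : no_isolated e) (hm : (1 <= num_edges e)%N).

Lemma deg_sum i : deg e i = (\sum_j (e i j : nat))%N.
Proof.
rewrite /deg -sum1_card big_mkcond /=; apply: eq_bigr => j _.
by rewrite inE; case: (e i j).
Qed.

Lemma handshake : (\sum_(i < n) deg e i)%N = (num_edges e).*2.
Proof.
pose up := (\sum_(i < n) \sum_(j < n) (((i < j)%N && e i j) : nat))%N.
suff sum_deg : (\sum_(i < n) deg e i)%N = up.*2 by rewrite /num_edges sum_deg doubleK.
have split_pairs : (\sum_(i < n) deg e i =
    up + \sum_(i < n) \sum_(j < n) (((j < i)%N && e i j) : nat))%N.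
  rewrite -big_split /=; apply: eq_bigr => i _; rewrite deg_sum -big_split /=.
  apply: eq_bigr => j _; case: (ltngtP i j) => h /=; rewrite ?addn0 ?add0n //.
  by rewrite (val_inj h) e_irr.
rewrite split_pairs -addnn; congr (_ + _)%N.
by rewrite exchange_big /=; apply: eq_bigr => i _; apply: eq_bigr => j _; rewrite e_sym.
Qed.

Lemma two_m_gt0 : 0 < 2 * (num_edges e)%:R :> R.
Proof. by rewrite mulr_gt0 // ltr0n. Qed.

Lemma modB_row_sum i : \sum_j modB e R i j = 0.
Proof.
have two_m_deg : 2 * (num_edges e)%:R = \sum_j (deg e j)%:R :> R.
  by rewrite -natr_sum handshake -mul2n natrM.
rewrite /modB sumrB -natr_sum -deg_sum.
under eq_bigr => j _ do rewrite mulrAC.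
by rewrite -mulr_sumr -two_m_deg divfK ?subrr // gt_eqF // two_m_gt0.
Qed.

Lemma obj_complete_sparse (d : 'I_n -> 'I_n -> R) : obj_complete e d = obj_sparse e d.
Proof.
rewrite /obj_complete /obj_sparse -mulrN -sumrN; congr (_ * _).
apply: eq_bigr => i _; rewrite -sumrN.
under eq_bigr => j _ do rewrite mulrBr mulr1.
by rewrite sumrB modB_row_sum sub0r sumrN.
Qed.

Lemma modB_nonedge_lt0 i j : ~~ e i j -> modB e R i j < 0.
Proof.
move=> /negbTE h; rewrite /modB h sub0r oppr_lt0.
by rewrite divr_gt0 ?two_m_gt0 // mulr_gt0 // ltr0n hiso.
Qed.

Section Raise.
Variables d D : 'I_n -> 'I_n -> R.
Hypothesis agree_edges : forall i j, e i j -> D i j = d i j.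
Hypothesis d_le_D : forall i j, d i j <= D i j.

Lemma modB_term_le i j : modB e R i j * D i j <= modB e R i j * d i j.
Proof.
case: (boolP (e i j)) => h; first by rewrite agree_edges.
by apply: ler_wnM2l; [apply/ltW/modB_nonedge_lt0 | apply: d_le_D].
Qed.

Lemma obj_sparse_raise : obj_sparse e d <= obj_sparse e D.
Proof.
rewrite /obj_sparse lerN2; apply: ler_wpM2l; first by rewrite invr_ge0 ltW ?two_m_gt0.
by apply: ler_sum => i _; apply: ler_sum => j _; apply: modB_term_le.
Qed.

Lemma obj_sparse_raise_eq : obj_sparse e D <= obj_sparse e d -> D = d.
Proof.
rewrite /obj_sparse lerN2 ler_pM2l ?invr_gt0 ?two_m_gt0 // => hle.
have gap_ge0 i j : 0 <= modB e R i j * d i j - modB e R i j * D i j.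
  by rewrite subr_ge0 modB_term_le.
have gap_sum : \sum_i \sum_j (modB e R i j * d i j - modB e R i j * D i j) = 0.
  under eq_bigr => k _ do rewrite sumrB.
  apply/eqP; rewrite sumrB subr_eq0 eq_le hle /=.
  by apply: ler_sum => i _; apply: ler_sum => j _; apply: modB_term_le.
apply: functional_extensionality => i; apply: functional_extensionality => j.
case: (boolP (e i j)) => h; first exact: agree_edges.
have row : \sum_j (modB e R i j * d i j - modB e R i j * D i j) = 0.
  by apply: (psumr_eq0P _ gap_sum) => // k _; apply: sumr_ge0.
move/eqP: (psumr_eq0P (fun k _ => gap_ge0 i k) row (i := j) isT).
by rewrite -mulrBr mulf_eq0 (lt_eqF (modB_nonedge_lt0 h)) subr_eq0 => /eqP.
Qed.

End Raise.
End Objective.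

(* Key fact: an optimal solution of LP_sparse is its own metric closure,
   hence feasible for LP_complete. *)
Lemma optimal_sparse_feasible_complete (R : realFieldType) (n : nat) (e : rel 'I_n)
  (e_sym : symmetric e) (hiso : no_isolated e) (hm : (1 <= num_edges e)%N)
  (d : 'I_n -> 'I_n -> R) :
  optimal_sparse e d -> feasible_complete d.
Proof.
move=> [hfs hopt]; have [D [hD agree d_le_D]] := sparse_closure e_sym hfs.
have no_gain := hopt D (feasible_complete_sparse e hD).
by rewrite -(obj_sparse_raise_eq hiso hm agree d_le_D no_gain).
Qed.

Theorem theorem2 (R : realFieldType) (n : nat) (e : rel 'I_n)
  (e_sym : symmetric e) (e_irr : irreflexive e)
  (hiso : no_isolated e) (hm : (1 <= num_edges e)%N) :
  (forall d : 'I_n -> 'I_n -> R, optimal_complete e d <-> optimal_sparse e d) /\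
  (forall d : 'I_n -> 'I_n -> R, optimal_sparse e d ->
     feasible_complete d /\ pseudo_metric d /\ (forall i j, 0 <= d i j <= 1)) /\
  (forall d1 d2 : 'I_n -> 'I_n -> R, optimal_complete e d1 -> optimal_sparse e d2 ->
     obj_complete e d1 = obj_sparse e d2).
Proof.
have obj_eq := obj_complete_sparse (R := R) e_sym e_irr hm.
have sparse_to_complete := optimal_sparse_feasible_complete (R := R) e_sym hiso hm.
have optimal_iff (d : 'I_n -> 'I_n -> R) : optimal_complete e d <-> optimal_sparse e d.
  split=> [[hfc hopt] | hos].
  - split=> [|d' /(sparse_closure e_sym) [D' [hD' agree le_D']]].
      exact: feasible_complete_sparse.
    apply: le_trans (obj_sparse_raise hiso hm agree le_D') _.
    by rewrite -!obj_eq hopt.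
  - split=> [|d' hd']; first exact: sparse_to_complete.
    by rewrite !obj_eq; apply: hos.2; exact: feasible_complete_sparse.
split=> //; split=> [d hos | d1 d2 h1 h2].
  have hfc := sparse_to_complete d hos.
  by split=> //; exact: feasible_complete_pseudo_metric.
have [hfs1 hopt1] := (optimal_iff d1).1 h1.
rewrite obj_eq; apply/eqP; by rewrite eq_le (h2.2 d1 hfs1) (hopt1 d2 h2.1).
Qed.
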